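(* Let $K$ be a field of characteristic $p$ with $K \neq \mathbb{F}_2$, and let $X_1,\dots,X_m$ be quasi-projective varieties over $K$. If for each $1 \le i \le m$ the set $S_i \subseteq \mathbb{N}_0$ is a $K$-DML set over $X_i$, then both $\bigcup_{i=1}^m S_i$ and $\bigcap_{i=1}^m S_i$ are $K$-DML sets over $X_1 \times \cdots \times X_m$.
   Context: For a quasi-projective variety $X$ over a field $K$, a set $S \subseteq \mathbb{N}_0$ is a $K$-DML set over $X$ if there exist an endomorphism $\Phi$ of $X$ (a morphism $X \to X$ defined over $K$), a point $\alpha \in X(K)$ and a closed subvariety $V \subseteq X$ defined over $K$ (not necessarily irreducible) such that $S = \{ n \in \mathbb{N}_0 : \Phi^n(\alpha) \in V(K)\}$. $\mathbb{N}_0$ denotes the nonnegative integers. *)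

From HB Require Import structures.
From mathcomp Require Import all_boot all_order all_algebra.
From mathcomp Require Export mpoly.
From Stdlib Require List.
Unset Strict Implicit.
Unset Printing Implicit Defensive.
Import Order.TTheory GRing.Theory Num.Theory.
Local Open Scope ring_scope.

(* Classical (Weil-style) model of quasi-projective varieties over a field K:
   we fix an algebraically closed field L together with an embedding
   iota : K -> L; points of P^N are represented by nonzero vectors
   x : 'I_N.+1 -> L, and every subset we consider is invariant under
   nonzero rescaling. *)

Section QP.
Variables (K : fieldType) (L : closedFieldType) (iota : {rmorphism K -> L}).

Definition evK {n : nat} (p : {mpoly K[n]}) (x : 'I_n -> L) : L :=
  (map_mpoly iota p).@[x].

Definition polyK (n : nat) := {mpoly K[n]}.

Definition nonzero_vec {n : nat} (x : 'I_n -> L) : Prop := exists i, x i != 0.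

Definition proportional {n : nat} (x y : 'I_n -> L) : Prop :=
  nonzero_vec x /\ exists c : L, c != 0 /\ y = (fun i => c * x i).

(* A "projective set": an ambient dimension N (the set lives in P^N(L))
   and a predicate on representative vectors. *)
Record pset := PSet { pdim : nat; ppts : ('I_pdim.+1 -> L) -> Prop }.

Definition homogK {n : nat} (p : {mpoly K[n]}) : Prop := exists d, p \is d.-homog.

(* X is a quasi-projective variety over K: a locally closed subset
   V(F) \ V(G) of P^N, F and G finite families of homogeneous polynomials
   with coefficients in K. *)
Definition is_qpvar (X : pset) : Prop :=
  exists F G : seq (polyK (pdim X).+1),
    (forall f, List.In f F -> homogK f) /\ (forall g, List.In g G -> homogK g) /\
    forall x, ppts X x <->
      (nonzero_vec x /\ (forall f, List.In f F -> evK f x = 0) /\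
       (exists g, List.In g G /\ evK g x != 0)).

(* phi is (a representative-level lift of) an endomorphism of X defined over
   K: phi is locally on X given by tuples of homogeneous polynomials of a
   common degree with coefficients in K; the open sets where the tuples do not
   vanish cover X, the tuples agree (projectively) on overlaps, and phi maps
   X into X. *)
Definition is_Kendo (X : pset)
  (phi : ('I_(pdim X).+1 -> L) -> ('I_(pdim X).+1 -> L)) : Prop :=
  exists pats : seq (nat * ('I_(pdim X).+1 -> polyK (pdim X).+1)),
    (forall pat, List.In pat pats -> forall i, pat.2 i \is pat.1.-homog) /\
    forall x, ppts X x ->
      ppts X (phi x) /\
      (exists pat, List.In pat pats /\ nonzero_vec (fun i => evK (pat.2 i) x)) /\
      (forall pat, List.In pat pats -> nonzero_vec (fun i => evK (pat.2 i) x) ->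
         proportional (fun i => evK (pat.2 i) x) (phi x)).

Definition Krational {n : nat} (alpha : 'I_n -> L) : Prop :=
  exists a : 'I_n -> K, alpha = (fun i => iota (a i)).

Definition KDML (X : pset) (S : nat -> Prop) : Prop :=
  exists phi, is_Kendo X phi /\
  exists alpha, ppts X alpha /\ Krational alpha /\
  exists H : seq (polyK (pdim X).+1),
    (forall h, List.In h H -> homogK h) /\
    forall n, S n <->
      (ppts X (iter n phi alpha) /\ forall h, List.In h H -> evK h (iter n phi alpha) = 0).

(* Segre embedding P^a x P^b -> P^((a+1)(b+1)-1); note (b + a * b.+1).+1
   = a.+1 * b.+1. *)
Definition segre {a b : nat} (x : 'I_a.+1 -> L) (y : 'I_b.+1 -> L)
  : 'I_(b + a * b.+1).+1 -> L :=
  fun k => x (inord (k %/ b.+1)) * y (inord (k %% b.+1)).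

Definition pprod (X Y : pset) : pset :=
  @PSet (pdim Y + pdim X * (pdim Y).+1)
    (fun z => exists x y, ppts X x /\ ppts Y y /\ proportional (segre x y) z).

(* the point Spec K = P^0 (empty product) *)
Definition ppoint : pset := @PSet 0 (fun x => nonzero_vec x).

Fixpoint pprod_seq (s : seq pset) : pset :=
  match s with
  | [::] => ppoint
  | [:: X] => X
  | X :: s' => pprod X (pprod_seq s')
  end.

End QP.

Arguments evK {K L} iota {n} p x.
Arguments nonzero_vec {L n} x.
Arguments proportional {L n} x y.
Arguments pset L : clear implicits.
Arguments PSet {L} pdim ppts.
Arguments pdim {L} p.
Arguments ppts {L} p _.
Arguments homogK {K n} p.
Arguments is_qpvar {K L} iota X.
Arguments is_Kendo {K L} iota X phi.
Arguments Krational {K L} iota {n} alpha.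
Arguments KDML {K L} iota X S.
Arguments segre {L a b} x y _.
Arguments pprod {L} X Y.
Arguments ppoint {L}.
Arguments pprod_seq {L} s.

From HB Require Import structures.
From mathcomp Require Import all_boot all_order all_algebra.
From mathcomp Require Import mpoly.
From Stdlib Require List.
From mathcomp Require Import zify ring.
From Stdlib Require Import FunctionalExtensionality Classical.

(* Realise X_1 x ... x X_m by iterated Segre embeddings, with coordinates
   z_ij = x_i y_j.  A form h of degree d in x becomes h(z_.j) = y_j^d h(x) and
   a form in y becomes h(z_i.) = x_i^d h(y), which turns K-data on the factors
   into K-data on the product:
   - for patterns f of Phi_1 and g of Phi_2 and indices i0, j0, the tuple
     (f_k(z_.j0) g_l(z_i0.))_(k,l) is a pattern of Phi_1 x Phi_2, valid where
     x_i0 y_j0 <> 0, so these patterns cover X_1 x X_2;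
   - V_1 x V_2 is cut out by all h(z_.j) and h'(z_i.), and
     (V_1 x X_2) u (X_1 x V_2) by all products h(z_.j) h'(z_i.).
   The orbit of (alpha_1, alpha_2) is (Phi_1^n alpha_1, Phi_2^n alpha_2), which
   gives the union and intersection of two DML sets; induction on m does the
   rest.  Neither the characteristic of K nor the hypothesis K <> F_2 plays a
   role. *)

Set Implicit Arguments.
Unset Strict Implicit.
Unset Printing Implicit Defensive.
Import GRing.Theory.
Local Open Scope ring_scope.

Section Polynomials.
Variables (K : fieldType) (L : closedFieldType) (iota : {rmorphism K -> L}).

Lemma evKE n (p : {mpoly K[n]}) v :
  evK iota p v = \sum_(m <- msupp p) iota p@_m * \prod_i v i ^+ m i.
Proof.
rewrite /evK mevalE (perm_big _ (msupp_map_mpoly _ (fmorph_inj iota))).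
by apply: eq_bigr => m _; rewrite mcoeff_map_mpoly.
Qed.

Lemma evKM n (p q : {mpoly K[n]}) v :
  evK iota (p * q) v = evK iota p v * evK iota q v.
Proof. by rewrite /evK rmorphM /= mevalM. Qed.

Lemma homog_msupp_deg n d (p : {mpoly K[n]}) (m : 'X_{1..n}) :
  p \is d.-homog -> m \in msupp p -> (\sum_i m i)%N = d.
Proof. by move=> hp hm; rewrite -mdegE; exact: (dhomog_mf hp hm). Qed.

Lemma evK_scale n d (p : {mpoly K[n]}) (c : L) v : p \is d.-homog ->
  evK iota p (fun i => c * v i) = c ^+ d * evK iota p v.
Proof.
move=> hp; rewrite !evKE mulr_sumr; apply: eq_big_seq => m hm.
rewrite -(homog_msupp_deg hp hm).
under eq_bigr do rewrite exprMn.
by rewrite big_split /= prodrXr mulrCA.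
Qed.

Definition mrename n k (g : 'I_n -> 'I_k) (p : {mpoly K[n]}) : {mpoly K[k]} :=
  p \mPo [tuple 'X_(g i) | i < n].

Lemma evK_mrename n k (g : 'I_n -> 'I_k) p v :
  evK iota (mrename g p) v = evK iota p (fun i => v (g i)).
Proof.
rewrite /mrename /evK (map_mpoly_comp _ _ (fmorph_inj iota)) comp_mpoly_meval.
by apply: meval_eq => i; rewrite tnth_map tnth_mktuple map_mpolyX mevalXU.
Qed.

Lemma mrename_homog n k (g : 'I_n -> 'I_k) d p :
  p \is d.-homog -> mrename g p \is d.-homog.
Proof.
move=> hp; rewrite /mrename comp_mpolyE big_seq.
apply: (big_ind (fun q => q \is d.-homog)) => [|x y|m hm]; first exact: dhomog0.
  exact: dhomogD.
apply: dhomogZ; rewrite -(homog_msupp_deg hp hm).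
apply: (big_ind2 (fun q (e : nat) => q \is e.-homog)) => [|x e1 y e2|i _].
- exact: dhomog1.
- exact: dhomogM.
have hX : ('X_(g i) : {mpoly K[k]}) \is 1.-homog by rewrite dhomogX; apply/eqP; exact: mdeg1.
by rewrite tnth_mktuple; have := dhomogMn (m i) hX; rewrite mul1n.
Qed.

End Polynomials.

Section Proportionality.
Variable L : closedFieldType.

Definition vscale n (c : L) (x : 'I_n -> L) := fun i => c * x i.

Lemma nonzero_vscale n c (x : 'I_n -> L) :
  c != 0 -> nonzero_vec x -> nonzero_vec (vscale c x).
Proof. by move=> hc [i hi]; exists i; rewrite /vscale mulf_neq0. Qed.

Lemma nonzero_vscale_inv n c (x : 'I_n -> L) :
  nonzero_vec (vscale c x) -> c != 0 /\ nonzero_vec x.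
Proof. by move=> [i]; rewrite /vscale mulf_eq0 negb_or => /andP[hc hx]; split; last exists i. Qed.

Lemma proportional_vscale n c (x : 'I_n -> L) :
  c != 0 -> nonzero_vec x -> proportional x (vscale c x).
Proof. by move=> hc hx; split => //; exists c. Qed.

Lemma proportional_refl n (x : 'I_n -> L) : nonzero_vec x -> proportional x x.
Proof.
move=> hx; split => //; exists 1; split; first exact: oner_neq0.
by apply: functional_extensionality => i; rewrite mul1r.
Qed.

Lemma proportional_nonzero n (x y : 'I_n -> L) : proportional x y -> nonzero_vec y.
Proof. by move=> [hx [c [hc ->]]]; exact: nonzero_vscale. Qed.

Lemma proportional_sym n (x y : 'I_n -> L) : proportional x y -> proportional y x.
Proof.
move=> hxy; split; first exact: proportional_nonzero hxy.
case: hxy => hx [c [hc ->]]; exists c^-1; split; first by rewrite invr_eq0.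
by apply: functional_extensionality => i; rewrite mulrA mulVf // mul1r.
Qed.

Lemma proportional_trans n (x y z : 'I_n -> L) :
  proportional x y -> proportional y z -> proportional x z.
Proof.
move=> [hx [c [hc ->]]] [_ [e [he ->]]]; split => //.
exists (e * c); split; first by rewrite mulf_neq0.
by apply: functional_extensionality => i; rewrite mulrA.
Qed.

Section Segre.
Variables a b : nat.

Lemma segre_ord_subproof (i : 'I_a.+1) (j : 'I_b.+1) : (i * b.+1 + j < (b + a * b.+1).+1)%N.
Proof.
have hi := ltn_ord i; have hj := ltn_ord j.
have : (i * b.+1 <= a * b.+1)%N by rewrite leq_mul2r -ltnS hi orbT.
lia.
Qed.

Definition segre_ord i j := Ordinal (segre_ord_subproof i j).

Lemma segre_ordE (x : 'I_a.+1 -> L) (y : 'I_b.+1 -> L) i j :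
  segre x y (segre_ord i j) = x i * y j.
Proof.
rewrite /segre /= divnMDl // divn_small // addn0 modnMDl modn_small //.
by rewrite !inord_val.
Qed.

Lemma segre_nonzero (x : 'I_a.+1 -> L) (y : 'I_b.+1 -> L) :
  nonzero_vec x -> nonzero_vec y -> nonzero_vec (segre x y).
Proof. by move=> [i hi] [j hj]; exists (segre_ord i j); rewrite segre_ordE mulf_neq0. Qed.

Lemma segre_nonzero_inv (x : 'I_a.+1 -> L) (y : 'I_b.+1 -> L) :
  nonzero_vec (segre x y) -> nonzero_vec x /\ nonzero_vec y.
Proof. by move=> [k]; rewrite /segre mulf_eq0 negb_or => /andP[hx hy]; split; eexists; [exact: hx|exact: hy]. Qed.

Lemma segre_vscale c e (x : 'I_a.+1 -> L) (y : 'I_b.+1 -> L) :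
  segre (vscale c x) (vscale e y) = vscale (c * e) (segre x y).
Proof. by apply: functional_extensionality => k; rewrite /segre /vscale mulrACA. Qed.

Lemma proportional_segre (x x' : 'I_a.+1 -> L) (y y' : 'I_b.+1 -> L) :
  proportional x x' -> proportional y y' -> proportional (segre x y) (segre x' y').
Proof.
move=> [hx [c [hc ->]]] [hy [e [he ->]]].
rewrite (segre_vscale c e x y); apply: proportional_vscale; first by rewrite mulf_neq0.
exact: segre_nonzero.
Qed.

Lemma Krational_segre (K : fieldType) (iota : {rmorphism K -> L})
    (x : 'I_a.+1 -> L) (y : 'I_b.+1 -> L) :
  Krational iota x -> Krational iota y -> Krational iota (segre x y).
Proof.
move=> [r ->] [s ->]; exists (fun k => r (inord (k %/ b.+1)) * s (inord (k %% b.+1))).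
by apply: functional_extensionality => k; rewrite /segre rmorphM.
Qed.

End Segre.
End Proportionality.

Lemma In_mem (T : eqType) (x : T) (s : seq T) : x \in s -> List.In x s.
Proof. by elim: s => //= y s IH; rewrite in_cons => /orP[/eqP ->|/IH]; [left|right]. Qed.

Lemma In_enum (T : finType) (x : T) : List.In x (enum T).
Proof. by apply: In_mem; rewrite mem_enum. Qed.

Definition flat_enum (A C : Type) (I : finType) (f : A -> I -> C) (s : list A) : list C :=
  List.flat_map (fun x => List.map (f x) (enum I)) s.

Lemma In_flat_enum (A C : Type) (I : finType) (f : A -> I -> C) s z :
  List.In z (flat_enum f s) <-> exists x i, List.In x s /\ z = f x i.
Proof.
split => [/List.in_flat_map [x [hx /List.in_map_iff [i [<- _]]]]|[x [i [hx ->]]]].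
  by exists x, i.
by apply/List.in_flat_map; exists x; split => //; apply/List.in_map_iff; exists i; split => //; exact: In_enum.
Qed.

Section Product.
Variables (K : fieldType) (L : closedFieldType) (iota : {rmorphism K -> L}).

Definition nonzero_pts (X : pset L) := forall x, ppts X x -> nonzero_vec x.

Definition homog_all n (H : seq (polyK K n)) := forall h, List.In h H -> homogK h.

Definition zero_locus n (H : seq (polyK K n)) (x : 'I_n -> L) :=
  forall h, List.In h H -> evK iota h x = 0.

Lemma not_zero_locus n (H : seq (polyK K n)) x :
  ~ zero_locus H x -> exists2 h, List.In h H & evK iota h x != 0.
Proof.
move=> hH; apply: NNPP => hne; apply: hH => h hh.
by apply/eqP; apply: NNPP => /negP hx; apply: hne; exists h.
Qed.

Definition eval_pat n k (pat : nat * ('I_n -> {mpoly K[k]})) (w : 'I_k -> L) : 'I_n -> L :=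
  fun i => evK iota (pat.2 i) w.

(* [is_Kendo iota X phi] unfolds to [exists pats, is_Kendo_with X phi pats]. *)
Definition is_Kendo_with (X : pset L) (phi : ('I_(pdim X).+1 -> L) -> ('I_(pdim X).+1 -> L))
    (pats : seq (nat * ('I_(pdim X).+1 -> polyK K (pdim X).+1))) : Prop :=
  (forall pat, List.In pat pats -> forall i, pat.2 i \is pat.1.-homog) /\
  forall x, ppts X x ->
    ppts X (phi x) /\
    (exists pat, List.In pat pats /\ nonzero_vec (fun i => evK iota (pat.2 i) x)) /\
    (forall pat, List.In pat pats -> nonzero_vec (fun i => evK iota (pat.2 i) x) ->
       proportional (fun i => evK iota (pat.2 i) x) (phi x)).
Arguments is_Kendo_with : clear implicits.

Variables X Y : pset L.
Local Notation a := (pdim X).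
Local Notation b := (pdim Y).
Local Notation N := (b + a * b.+1)%N.

Definition segre_lift1 (j : 'I_b.+1) (p : {mpoly K[a.+1]}) : {mpoly K[N.+1]} :=
  mrename (fun i => segre_ord i j) p.

Definition segre_lift2 (i : 'I_a.+1) (q : {mpoly K[b.+1]}) : {mpoly K[N.+1]} :=
  mrename (segre_ord i) q.

Lemma evK_segre_lift1 j d p c u v : p \is d.-homog ->
  evK iota (segre_lift1 j p) (vscale c (segre u v)) = (c * v j) ^+ d * evK iota p u.
Proof.
move=> hp; rewrite evK_mrename -evK_scale //; congr evK.
by apply: functional_extensionality => i; rewrite /vscale segre_ordE; ring.
Qed.

Lemma evK_segre_lift2 i d q c u v : q \is d.-homog ->
  evK iota (segre_lift2 i q) (vscale c (segre u v)) = (c * u i) ^+ d * evK iota q v.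
Proof.
move=> hq; rewrite evK_mrename -evK_scale //; congr evK.
by apply: functional_extensionality => j; rewrite /vscale segre_ordE; ring.
Qed.

Definition pat_pprod (p1 : nat * ('I_a.+1 -> polyK K a.+1))
    (p2 : nat * ('I_b.+1 -> polyK K b.+1)) (i0 : 'I_a.+1) (j0 : 'I_b.+1) :
    nat * ('I_N.+1 -> polyK K N.+1) :=
  ((p1.1 + p2.1)%N, fun k : 'I_N.+1 => segre_lift1 j0 (p1.2 (inord (k %/ b.+1))) *
                             segre_lift2 i0 (p2.2 (inord (k %% b.+1)))).

Lemma pat_pprod_homog p1 p2 i0 j0 :
  (forall i, p1.2 i \is p1.1.-homog) -> (forall j, p2.2 j \is p2.1.-homog) ->
  forall k, (pat_pprod p1 p2 i0 j0).2 k \is (pat_pprod p1 p2 i0 j0).1.-homog.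
Proof. by move=> h1 h2 k; apply: dhomogM; exact: mrename_homog. Qed.

Lemma eval_pat_pprod p1 p2 i0 j0 c u v :
  (forall i, p1.2 i \is p1.1.-homog) -> (forall j, p2.2 j \is p2.1.-homog) ->
  eval_pat (pat_pprod p1 p2 i0 j0) (vscale c (segre u v)) =
  vscale ((c * v j0) ^+ p1.1 * (c * u i0) ^+ p2.1) (segre (eval_pat p1 u) (eval_pat p2 v)).
Proof.
move=> h1 h2; apply: functional_extensionality => k.
rewrite /eval_pat /= evKM (evK_segre_lift1 _ _ _ _ (h1 _)) (evK_segre_lift2 _ _ _ _ (h2 _)).
by rewrite /vscale /segre; ring.
Qed.

Section Endomorphism.
Variables (phi1 : ('I_a.+1 -> L) -> ('I_a.+1 -> L)) (pats1 : seq (nat * ('I_a.+1 -> polyK K a.+1))).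
Variables (phi2 : ('I_b.+1 -> L) -> ('I_b.+1 -> L)) (pats2 : seq (nat * ('I_b.+1 -> polyK K b.+1))).
Hypotheses (endo1 : is_Kendo_with X phi1 pats1) (endo2 : is_Kendo_with Y phi2 pats2).
Hypotheses (nzX : nonzero_pts X) (nzY : nonzero_pts Y).

Definition pats_pprod : seq (nat * ('I_N.+1 -> polyK K N.+1)) :=
  flat_enum (fun pp ij => pat_pprod pp.1 pp.2 ij.1 ij.2) (List.list_prod pats1 pats2).

Lemma In_pats_pprod pat : List.In pat pats_pprod ->
  exists p1 p2 i0 j0, [/\ List.In p1 pats1, List.In p2 pats2 & pat = pat_pprod p1 p2 i0 j0].
Proof.
by move=> /In_flat_enum [[p1 p2] [[i0 j0] [/List.in_prod_iff [h1 h2] ->]]]; exists p1, p2, i0, j0.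
Qed.

Definition endo_pprod (w : 'I_N.+1 -> L) : 'I_N.+1 -> L :=
  match List.find (fun pat => [exists i, eval_pat pat w i != 0]) pats_pprod with
  | Some pat => eval_pat pat w
  | None => w (* only reached off [pprod X Y] *)
  end.

Lemma pats_pprod_proportional u v w pat :
  ppts X u -> ppts Y v -> proportional (segre u v) w ->
  List.In pat pats_pprod -> nonzero_vec (eval_pat pat w) ->
  proportional (segre (phi1 u) (phi2 v)) (eval_pat pat w).
Proof.
move=> hu hv [_ [c [hc ->]]] /In_pats_pprod [p1 [p2 [i0 [j0 [h1 h2 ->]]]]].
rewrite eval_pat_pprod; [|exact: endo1.1|exact: endo2.1].
move=> /nonzero_vscale_inv [hs /segre_nonzero_inv [n1 n2]].
apply: proportional_trans (proportional_vscale hs (segre_nonzero n1 n2)).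
have [_ [_ q1]] := endo1.2 _ hu; have [_ [_ q2]] := endo2.2 _ hv.
by apply: proportional_segre; apply: proportional_sym; [exact: q1|exact: q2].
Qed.

Lemma pats_pprod_cover u v w : ppts X u -> ppts Y v -> proportional (segre u v) w ->
  exists2 pat, List.In pat pats_pprod & nonzero_vec (eval_pat pat w).
Proof.
move=> hu hv [_ [c [hc ->]]].
have [_ [[p1 [h1 n1]] _]] := endo1.2 _ hu; have [_ [[p2 [h2 n2]] _]] := endo2.2 _ hv.
have [i0 hi0] := nzX hu; have [j0 hj0] := nzY hv.
exists (pat_pprod p1 p2 i0 j0).
  apply/In_flat_enum; exists (p1, p2), (i0, j0); split => //; exact/List.in_prod.
rewrite eval_pat_pprod; [|exact: endo1.1|exact: endo2.1].
apply: nonzero_vscale; last exact: segre_nonzero.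
by rewrite mulf_neq0 // expf_neq0 // mulf_neq0.
Qed.

Lemma endo_pprod_segre u v w : ppts X u -> ppts Y v -> proportional (segre u v) w ->
  proportional (segre (phi1 u) (phi2 v)) (endo_pprod w).
Proof.
move=> hu hv hw; rewrite /endo_pprod.
case E: List.find => [pat|].
  have [hin /existsP [i hi]] := List.find_some _ _ E.
  by apply: pats_pprod_proportional hin _ => //; exists i.
have [pat hin [i hi]] := pats_pprod_cover hu hv hw.
by have := List.find_none _ _ E pat hin; move/existsP; case; exists i.
Qed.

Lemma is_Kendo_endo_pprod : is_Kendo iota (pprod X Y) endo_pprod.
Proof.
exists pats_pprod; split.
  move=> pat /In_pats_pprod [p1 [p2 [i0 [j0 [h1 h2 ->]]]]].
  by apply: pat_pprod_homog; [exact: endo1.1|exact: endo2.1].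
move=> w [u [v [hu [hv hw]]]]; split; [|split].
- exists (phi1 u), (phi2 v); split; first exact: (endo1.2 _ hu).1.
  by split; [exact: (endo2.2 _ hv).1|exact: endo_pprod_segre].
- by have [pat] := pats_pprod_cover hu hv hw; exists pat.
- move=> pat hin hnz; apply: proportional_trans (endo_pprod_segre hu hv hw).
  exact/proportional_sym/(pats_pprod_proportional hu hv hw hin hnz).
Qed.

Lemma iter_endo_pprod u v n : ppts X u -> ppts Y v ->
  [/\ ppts X (iter n phi1 u), ppts Y (iter n phi2 v) &
      proportional (segre (iter n phi1 u) (iter n phi2 v)) (iter n endo_pprod (segre u v))].
Proof.
move=> hu hv; elim: n => [|n [h1 h2 h3]] /=.
  by split => //; apply/proportional_refl/segre_nonzero; [exact: nzX|exact: nzY].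
split; [exact: (endo1.2 _ h1).1|exact: (endo2.2 _ h2).1|exact: endo_pprod_segre].
Qed.

End Endomorphism.

Definition union_eqs (H1 : seq (polyK K a.+1)) (H2 : seq (polyK K b.+1)) : seq (polyK K N.+1) :=
  flat_enum (fun hh ij => segre_lift1 ij.2 hh.1 * segre_lift2 ij.1 hh.2)
    (List.list_prod H1 H2).

Definition inter_eqs (H1 : seq (polyK K a.+1)) (H2 : seq (polyK K b.+1)) : seq (polyK K N.+1) :=
  flat_enum (fun h j => segre_lift1 j h) H1 ++ flat_enum (fun h i => segre_lift2 i h) H2.

Lemma In_union_eqs H1 H2 h1 h2 i j : List.In h1 H1 -> List.In h2 H2 ->
  List.In (segre_lift1 j h1 * segre_lift2 i h2) (union_eqs H1 H2).
Proof. by move=> ih1 ih2; apply/In_flat_enum; exists (h1, h2), (i, j); split => //; exact/List.in_prod. Qed.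

Lemma In_inter_eqs1 H1 H2 h j : List.In h H1 -> List.In (segre_lift1 j h) (inter_eqs H1 H2).
Proof. by move=> ih; apply/List.in_or_app; left; apply/In_flat_enum; exists h, j. Qed.

Lemma In_inter_eqs2 H1 H2 h i : List.In h H2 -> List.In (segre_lift2 i h) (inter_eqs H1 H2).
Proof. by move=> ih; apply/List.in_or_app; right; apply/In_flat_enum; exists h, i. Qed.

Lemma union_eqs_homog H1 H2 :
  homog_all H1 -> homog_all H2 -> homog_all (union_eqs H1 H2).
Proof.
move=> hH1 hH2 h /In_flat_enum [[h1 h2] [[i j] [/List.in_prod_iff [i1 i2] ->]]].
have [d1 hd1] := hH1 _ i1; have [d2 hd2] := hH2 _ i2.
by exists (d1 + d2)%N; apply: dhomogM; exact: mrename_homog.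
Qed.

Lemma inter_eqs_homog H1 H2 :
  homog_all H1 -> homog_all H2 -> homog_all (inter_eqs H1 H2).
Proof.
move=> hH1 hH2 h /List.in_app_iff [] /In_flat_enum [h' [i [ih ->]]].
  by have [d hd] := hH1 _ ih; exists d; exact: mrename_homog.
by have [d hd] := hH2 _ ih; exists d; exact: mrename_homog.
Qed.

Section ZeroLocus.
Variables (H1 : seq (polyK K a.+1)) (H2 : seq (polyK K b.+1)) (c : L).
Variables (u : 'I_a.+1 -> L) (v : 'I_b.+1 -> L).
Hypotheses (hH1 : homog_all H1) (hH2 : homog_all H2) (hc : c != 0).
Hypotheses (hu : nonzero_vec u) (hv : nonzero_vec v).
Local Notation w := (vscale c (segre u v)).

Lemma evK_segre_lift1_homog j h : List.In h H1 -> exists2 e : L,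
  (v j != 0 -> e != 0) & evK iota (segre_lift1 j h) w = e * evK iota h u.
Proof.
move=> ih; have [d hd] := hH1 ih; rewrite (evK_segre_lift1 _ _ _ _ hd).
by exists ((c * v j) ^+ d) => // hj; rewrite expf_neq0 // mulf_neq0.
Qed.

Lemma evK_segre_lift2_homog i h : List.In h H2 -> exists2 e : L,
  (u i != 0 -> e != 0) & evK iota (segre_lift2 i h) w = e * evK iota h v.
Proof.
move=> ih; have [d hd] := hH2 ih; rewrite (evK_segre_lift2 _ _ _ _ hd).
by exists ((c * u i) ^+ d) => // hi; rewrite expf_neq0 // mulf_neq0.
Qed.

Lemma zero_locus_union_eqs :
  zero_locus (union_eqs H1 H2) w <-> zero_locus H1 u \/ zero_locus H2 v.
Proof.
have evE h1 h2 i j : List.In h1 H1 -> List.In h2 H2 -> exists2 e : L,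
    (u i != 0 -> v j != 0 -> e != 0) &
    evK iota (segre_lift1 j h1 * segre_lift2 i h2) w = e * (evK iota h1 u * evK iota h2 v).
  move=> ih1 ih2; rewrite evKM; have [e1 he1 ->] := evK_segre_lift1_homog j ih1.
  have [e2 he2 ->] := evK_segre_lift2_homog i ih2.
  by exists (e1 * e2); [move=> hi hj; rewrite mulf_neq0 ?he1 ?he2|rewrite mulrACA].
split => [hz|hz h /In_flat_enum [[h1 h2] [[i j] [/List.in_prod_iff [ih1 ih2] ->]]]].
  case: (classic (zero_locus H1 u)) => [|/not_zero_locus [h1 ih1 nz1]]; [by left|right].
  move=> h2 ih2; have [i0 hi0] := hu; have [j0 hj0] := hv.
  have [e /(_ hi0 hj0) he ev] := evE h1 h2 i0 j0 ih1 ih2.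
  have /eqP := hz _ (In_union_eqs i0 j0 ih1 ih2).
  by rewrite /= ev !mulf_eq0 (negbTE he) (negbTE nz1) => /eqP.
have [e _ ->] := evE h1 h2 i j ih1 ih2.
by case: hz => [z|z]; rewrite z // ?mul0r ?mulr0.
Qed.

Lemma zero_locus_inter_eqs :
  zero_locus (inter_eqs H1 H2) w <-> zero_locus H1 u /\ zero_locus H2 v.
Proof.
split => [hz|[z1 z2] h /List.in_app_iff [] /In_flat_enum [h' [k [ih ->]]]].
- have [i0 hi0] := hu; have [j0 hj0] := hv.
  split => h ih.
    have [e /(_ hj0) he ev] := evK_segre_lift1_homog j0 ih.
    have /eqP := hz _ (In_inter_eqs1 H2 j0 ih).
    by rewrite ev mulf_eq0 (negbTE he) => /eqP.
  have [e /(_ hi0) he ev] := evK_segre_lift2_homog i0 ih.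
  have /eqP := hz _ (In_inter_eqs2 H1 i0 ih).
  by rewrite ev mulf_eq0 (negbTE he) => /eqP.
- by have [e _ ->] := evK_segre_lift1_homog k ih; rewrite z1 ?mulr0.
- by have [e _ ->] := evK_segre_lift2_homog k ih; rewrite z2 ?mulr0.
Qed.

End ZeroLocus.

Lemma ppts_pprod_vscale u v c : ppts X u -> ppts Y v -> c != 0 ->
  nonzero_vec (segre u v) -> ppts (pprod X Y) (vscale c (segre u v)).
Proof. by move=> hu hv hc huv; exists u, v; do 2!split => //; exact: proportional_vscale. Qed.

Lemma KDML_pprod_orbit S1 S2 : nonzero_pts X -> nonzero_pts Y ->
  KDML iota X S1 -> KDML iota Y S2 ->
  exists Phi, is_Kendo iota (pprod X Y) Phi /\
  exists alpha, ppts (pprod X Y) alpha /\ Krational iota alpha /\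
  exists H1 H2, homog_all H1 /\ homog_all H2 /\
  forall n, exists u v c,
    [/\ ppts X u, ppts Y v, c != 0 & iter n Phi alpha = vscale c (segre u v)] /\
    (S1 n <-> zero_locus H1 u) /\ (S2 n <-> zero_locus H2 v).
Proof.
move=> nzX nzY [phi1 [[pats1 endo1] [a1 [ha1 [ra1 [H1 [hH1 hS1]]]]]]].
move=> [phi2 [[pats2 endo2] [a2 [ha2 [ra2 [H2 [hH2 hS2]]]]]]].
have n12 : nonzero_vec (segre a1 a2) by apply: segre_nonzero; [exact: nzX|exact: nzY].
exists (endo_pprod pats1 pats2); split; first exact: (is_Kendo_endo_pprod endo1 endo2 nzX nzY).
exists (segre a1 a2); split; first by exists a1, a2; do 2!split => //; exact: proportional_refl.
split; first exact: Krational_segre.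
exists H1, H2; split => //; split => // n.
have [o1 o2 [_ [c [hc ew]]]] := iter_endo_pprod endo1 endo2 nzX nzY n ha1 ha2.
exists (iter n phi1 a1), (iter n phi2 a2), c.
by rewrite hS1 hS2; do 2!split => //; split => [[]|].
Qed.

Lemma KDML_pprod_or S1 S2 : nonzero_pts X -> nonzero_pts Y ->
  KDML iota X S1 -> KDML iota Y S2 -> KDML iota (pprod X Y) (fun n => S1 n \/ S2 n).
Proof.
move=> nzX nzY k1 k2.
have [Phi [endo [al [hal [ral [H1 [H2 [hH1 [hH2 orb]]]]]]]]] := KDML_pprod_orbit nzX nzY k1 k2.
exists Phi; split => //; exists al; do 2!split => //.
exists (union_eqs H1 H2); split; first exact: union_eqs_homog.
move=> n; have [u [v [c [[hu hv hc ->] [e1 e2]]]]] := orb n.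
have [nu nv] := (nzX _ hu, nzY _ hv).
rewrite e1 e2 -(zero_locus_union_eqs hH1 hH2 hc nu nv).
split => [z|[_ z]//]; split => //.
by apply: ppts_pprod_vscale => //; exact: segre_nonzero.
Qed.

Lemma KDML_pprod_and S1 S2 : nonzero_pts X -> nonzero_pts Y ->
  KDML iota X S1 -> KDML iota Y S2 -> KDML iota (pprod X Y) (fun n => S1 n /\ S2 n).
Proof.
move=> nzX nzY k1 k2.
have [Phi [endo [al [hal [ral [H1 [H2 [hH1 [hH2 orb]]]]]]]]] := KDML_pprod_orbit nzX nzY k1 k2.
exists Phi; split => //; exists al; do 2!split => //.
exists (inter_eqs H1 H2); split; first exact: inter_eqs_homog.
move=> n; have [u [v [c [[hu hv hc ->] [e1 e2]]]]] := orb n.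
have [nu nv] := (nzX _ hu, nzY _ hv).
rewrite e1 e2 -(zero_locus_inter_eqs hH1 hH2 hc nu nv).
split => [z|[_ z]//]; split => //.
by apply: ppts_pprod_vscale => //; exact: segre_nonzero.
Qed.

End Product.

Section Sequences.
Variables (K : fieldType) (L : closedFieldType) (iota : {rmorphism K -> L}).

Lemma KDML_ext (X : pset L) (S S' : nat -> Prop) :
  (forall n, S n <-> S' n) -> KDML iota X S -> KDML iota X S'.
Proof.
move=> e [phi [endo [al [hal [ral [H [hH hS]]]]]]].
exists phi; split => //; exists al; do 2!split => //; exists H; split => // n.
by rewrite -e.
Qed.

Lemma nonzero_pts_qpvar (X : pset L) : is_qpvar iota X -> nonzero_pts X.
Proof. by move=> [F [G [_ [_ e]]]] x /e []. Qed.

Lemma nonzero_pts_pprod (X Y : pset L) : nonzero_pts (pprod X Y).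
Proof. by move=> z [x [y [_ [_ h]]]]; exact: proportional_nonzero h. Qed.

Lemma nonzero_pts_pprod_seq (T : Type) (XS : seq (pset L * T)) :
  (forall XSi, List.In XSi XS -> nonzero_pts XSi.1) -> nonzero_pts (pprod_seq (map fst XS)).
Proof.
case: XS => [|X [|Y XS]] hXS /=; [by move=> x|exact: hXS (or_introl erefl)|].
exact: nonzero_pts_pprod.
Qed.

Lemma KDML_pprod_seq (comb : (nat -> Prop) -> (nat -> Prop) -> nat -> Prop)
    (Q : seq (pset L * (nat -> Prop)) -> nat -> Prop) :
  (forall X Y S1 S2, nonzero_pts X -> nonzero_pts Y ->
     KDML iota X S1 -> KDML iota Y S2 -> KDML iota (pprod X Y) (comb S1 S2)) ->
  (forall XSi n, Q [:: XSi] n <-> XSi.2 n) ->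
  (forall XSi XSj XS n, Q [:: XSi, XSj & XS] n <-> comb XSi.2 (Q (XSj :: XS)) n) ->
  forall XS, XS <> [::] ->
  (forall XSi, List.In XSi XS -> is_qpvar iota XSi.1) ->
  (forall XSi, List.In XSi XS -> KDML iota XSi.1 XSi.2) ->
  KDML iota (pprod_seq (map fst XS)) (Q XS).
Proof.
move=> hcomb Q1 Qcons; elim=> [//|X [|Y XS] IH] _ hX hS.
  by apply: KDML_ext (hS X (or_introl erefl)) => n; rewrite Q1.
apply: KDML_ext (fun n => iff_sym (Qcons X Y XS n)) _.
apply: hcomb; last 1 first.
- by apply: IH => // XSi h; [apply: hX|apply: hS]; right.
- exact/nonzero_pts_qpvar/hX/or_introl.
- by apply: (nonzero_pts_pprod_seq (XS := Y :: XS)) => XSi h; apply/nonzero_pts_qpvar/hX/or_intror.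
- exact: hS (or_introl erefl).
Qed.

End Sequences.

Theorem lemma2p1 (K : fieldType) (L : closedFieldType) (iota : {rmorphism K -> L})
  (hK : ~ (forall x : K, x = 0%R \/ x = 1%R))
  (XS : seq (pset L * (nat -> Prop)))
  (hm : XS <> [::])
  (hX : forall XSi, List.In XSi XS -> is_qpvar iota XSi.1)
  (hS : forall XSi, List.In XSi XS -> KDML iota XSi.1 XSi.2) :
  KDML iota (pprod_seq (map fst XS)) (fun n => exists XSi, List.In XSi XS /\ XSi.2 n) /\
  KDML iota (pprod_seq (map fst XS)) (fun n => forall XSi, List.In XSi XS -> XSi.2 n).
Proof.
split.
  apply: (KDML_pprod_seq (comb := fun S1 S2 n => S1 n \/ S2 n)
           (Q := fun XS n => exists XSi, List.In XSi XS /\ XSi.2 n) _ _ _ hm hX hS).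
  - exact: KDML_pprod_or.
  - by move=> XSi n; split => [[Z [[<-|[]] h]]|h] //; exists XSi; split => //; left.
  move=> XSi XSj XS' n.
  split => [[Z [[<-|hZ] h]]|[h|[Z [hZ h]]]]; [by left|by right; exists Z|..].
    by exists XSi; split => //; left.
  by exists Z; split => //; right.
apply: (KDML_pprod_seq (comb := fun S1 S2 n => S1 n /\ S2 n)
         (Q := fun XS n => forall XSi, List.In XSi XS -> XSi.2 n) _ _ _ hm hX hS).
- exact: KDML_pprod_and.
- by move=> XSi n; split => [/(_ XSi (or_introl erefl))|h Z [<-|[]]].
move=> XSi XSj XS' n.
split => [h|[h1 h2] Z [<-|hZ]] //; last exact: h2.
by split => [|Z hZ]; apply: h; [left|right].
Qed.
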